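(* Let $0\le\alpha<1$ and let $v$ be a $C^\infty$ real function such that $v(\varphi)>0$ and $v'(\varphi)>0$ for all $\varphi$ larger than some $\varphi_0$, and such that $(\log\sqrt{v(\varphi)})'\to\alpha$ as $\varphi\to\infty$. Let $h_{\mathrm s}$ be the separatrix solution of $h'=\sqrt{h^2-v}$. Then $$h_{\mathrm s}(\varphi)\sim\frac{\sqrt{v(\varphi)}}{\sqrt{1-\alpha^2}},\qquad\varphi\to\infty.$$
   Context: Take $\varphi_0$ such that $(\log\sqrt v)'<1$ on $(\varphi_0,\infty)$. A solution of $h'=\sqrt{h^2-v}$ in $R_0=\{(\varphi,h):\varphi\ge\varphi_0,\ h>\sqrt{v(\varphi)}\}$ is of type A if it reaches the curve $h=\sqrt{v(\varphi)}$ at a finite $\varphi$, and of type B if it remains in $R_0$ for all $\varphi>\varphi_0$. For such $v$ both types occur, there is $r<\infty$ such that solutions with $h(\varphi_0)<r$ are of type A and those with $h(\varphi_0)>r$ are of type B, and the separatrix $h_{\mathrm s}$ is the solution with $h_{\mathrm s}(\varphi_0)=r$; it is defined for all $\varphi\ge\varphi_0$ and $h_{\mathrm s}/\sqrt v$ is bounded there. *)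

From Stdlib Require Import Reals.
From Coquelicot Require Import Coquelicot.
Open Scope R_scope.

Definition smooth (v : R -> R) : Prop :=
  forall (n : nat) (x : R), ex_derive_n v n x.

Definition typeA (v : R -> R) (phi0 c : R) : Prop :=
  exists (phi1 : R) (h : R -> R),
    phi0 < phi1 /\ h phi0 = c /\
    filterlim h (at_right phi0) (locally (h phi0)) /\
    filterlim h (at_left phi1) (locally (h phi1)) /\
    (forall phi, phi0 <= phi < phi1 -> h phi > sqrt (v phi)) /\
    (forall phi, phi0 < phi < phi1 ->
        is_derive h phi (sqrt (h phi ^ 2 - v phi))) /\
    h phi1 = sqrt (v phi1).

Definition global_sol (v : R -> R) (phi0 : R) (h : R -> R) : Prop :=
  filterlim h (at_right phi0) (locally (h phi0)) /\
  (forall phi, phi0 <= phi -> h phi > sqrt (v phi)) /\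
  (forall phi, phi0 < phi -> is_derive h phi (sqrt (h phi ^ 2 - v phi))).

Definition typeB (v : R -> R) (phi0 c : R) : Prop :=
  exists h : R -> R, h phi0 = c /\ global_sol v phi0 h.

Definition separatrix (v : R -> R) (phi0 : R) (hs : R -> R) : Prop :=
  global_sol v phi0 hs /\
  (forall c, sqrt (v phi0) < c < hs phi0 -> typeA v phi0 c) /\
  (forall c, hs phi0 < c -> typeB v phi0 c).

From Stdlib Require Import Reals Lra.
From Coquelicot Require Import Coquelicot.
Open Scope R_scope.

(* Write u = sqrt v and L = (ln u)'. Where a solution of h' = sqrt (h^2 - v) meets the curve
   b u (b >= 1) its slope is sqrt (b^2 - 1) u, against b L u for the curve; as L -> alpha, the
   direction of crossing is eventually the sign of sqrt (b^2 - 1) - b alpha, which changes at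
   b = 1 / sqrt (1 - alpha^2).
   For larger b, h - b u eventually only crosses zero upwards, so no type-A solution (which has
   to come back down to u) starts above b u; since type-A solutions approximate h_s on compact
   intervals (a Gronwall estimate), h_s <= b u eventually.
   For 1 < b < 1 / sqrt (1 - alpha^2), even the slowly descending barrier (b - mu (x - x1)) u
   can only be crossed downwards, so a solution below b u at x1 would reach u; h_s never does,
   hence b u <= h_s eventually. *)

Lemma is_derive_continuous (f : R -> R) x d : is_derive f x d -> continuous f x.
Proof. intros Hd; apply (ex_derive_continuous f); exists d; exact Hd. Qed.

Lemma continuous_at_right (f : R -> R) x :
  continuous f x -> filterlim f (at_right x) (locally (f x)).
Proof. apply filterlim_filter_le_1, filter_le_within. Qed.

Lemma continuous_at_left (f : R -> R) x :
  continuous f x -> filterlim f (at_left x) (locally (f x)).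
Proof. apply filterlim_filter_le_1, filter_le_within. Qed.

Lemma filterlim_Rminus {T} {F : (T -> Prop) -> Prop} {FF : Filter F} (f g : T -> R) a b :
  filterlim f F (locally a) -> filterlim g F (locally b) ->
  filterlim (fun x => f x - g x) F (locally (a - b)).
Proof.
  intros Hf Hg.
  apply (filterlim_comp_2 (H := locally (- b)) f (fun x => - g x) Rplus Hf).
  - exact (filterlim_comp _ _ _ g Ropp F (locally b) (locally (- b)) Hg (filterlim_opp b)).
  - exact (filterlim_plus a (- b)).
Qed.

Lemma continuous_Rmax_extension (f : R -> R) a :
  filterlim f (at_right a) (locally (f a)) -> (forall x, a < x -> continuous f x) ->
  forall x, continuous (fun y => f (Rmax a y)) x.
Proof.
  intros Hright Hcont x.
  destruct (Rtotal_order x a) as [Hxa|[->|Hax]].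
  - apply (continuous_ext_loc _ (fun _ => f a)); [|apply continuous_const].
    apply (filter_imp (fun y => y < a)); [|exact (open_lt a x Hxa)].
    intros y Hy; rewrite Rmax_left; lra.
  - intros P HP; rewrite Rmax_left in HP by lra.
    destruct (Hright P HP) as [d Hd]; exists d; intros y Hy.
    destruct (Rle_or_lt y a) as [Hya|Hay].
    + rewrite Rmax_left by exact Hya; exact (locally_singleton _ _ HP).
    + rewrite Rmax_right by lra; exact (Hd y Hy Hay).
  - apply (continuous_ext_loc _ f); [|exact (Hcont x Hax)].
    apply (filter_imp (fun y => a < y)); [|exact (open_gt a x Hax)].
    intros y Hy; rewrite Rmax_right; lra.
Qed.

Lemma is_lim_eventually_lt (f : R -> R) (l t : R) :
  is_lim f p_infty l -> l < t -> Rbar_locally p_infty (fun x => f x < t).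
Proof. intros Hf Hlt; exact (Hf _ (open_lt t l Hlt)). Qed.

Lemma is_lim_eventually_gt (f : R -> R) (l t : R) :
  is_lim f p_infty l -> t < l -> Rbar_locally p_infty (fun x => t < f x).
Proof. intros Hf Hlt; exact (Hf _ (open_gt t l Hlt)). Qed.

Lemma nonneg_at_left_limit (f : R -> R) a b : a < b ->
  (forall x, a < x < b -> 0 <= f x) ->
  filterlim f (at_left b) (locally (f b)) -> 0 <= f b.
Proof.
  intros Hab Hpos Hlim.
  apply (closed_filterlim_loc _ _ _ Hlim); [|apply closed_ge].
  exists (mkposreal _ (proj2 (Rlt_0_minus _ _) Hab)); intros y Hy Hyb.
  apply Hpos; split; [|exact Hyb].
  change (Rabs (y - b) < b - a) in Hy; apply Rabs_def2 in Hy; lra.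
Qed.

Lemma at_right_pos (f : R -> R) a : 0 < f a ->
  filterlim f (at_right a) (locally (f a)) ->
  exists d, 0 < d /\ forall y, a <= y < a + d -> 0 < f y.
Proof.
  intros Hfa Hlim.
  destruct (Hlim _ (open_gt 0 (f a) Hfa)) as [d Hd].
  exists d; split; [apply cond_pos|]; intros y Hy.
  destruct (Req_dec y a) as [->|Hya]; [exact Hfa|].
  apply Hd; [change (Rabs (y - a) < d); apply Rabs_def1|]; lra.
Qed.

Lemma is_derive_pos_lt_left (f : R -> R) x d : is_derive f x d -> 0 < d ->
  forall e, 0 < e -> exists y, x - e < y < x /\ f y < f x.
Proof.
  intros Hd Hd0 e He.
  apply is_derive_Reals in Hd.
  destruct (Hd (d / 2) ltac:(lra)) as [del Hdel].
  pose proof (cond_pos del).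
  set (k := Rmin (del / 2) (e / 2)).
  assert (0 < k) by (apply Rmin_glb_lt; lra).
  assert (k <= del / 2) by apply Rmin_l.
  assert (k <= e / 2) by apply Rmin_r.
  specialize (Hdel (- k) ltac:(lra) ltac:(rewrite Rabs_Ropp, Rabs_right; lra)).
  apply Rabs_def2 in Hdel.
  exists (x + - k); split; [lra|].
  assert (Hq : 0 < (f (x + - k) - f x) / - k) by lra.
  assert (Hk : / - k < 0) by (apply Rinv_lt_0_compat; lra).
  unfold Rdiv in Hq; nra.
Qed.

Lemma first_zero (f : R -> R) a x0 : a < x0 -> 0 < f a -> f x0 <= 0 ->
  filterlim f (at_right a) (locally (f a)) -> (forall x, a < x <= x0 -> continuous f x) ->
  exists T, a < T <= x0 /\ f T = 0 /\ forall s, a <= s < T -> 0 < f s.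
Proof.
  intros Hax0 Hfa Hfx0 Hright Hcont.
  (* T is the supremum of the points up to which f stays positive; f T > 0 would let
     positivity extend beyond T. *)
  set (S t := a <= t <= x0 /\ forall s, a <= s <= t -> 0 < f s).
  destruct (completeness S) as [T [HTub HTlub]].
  { exists x0; intros t [Ht _]; lra. }
  { exists a; split; [lra|intros s Hs; replace s with a by lra; exact Hfa]. }
  assert (Hbelow : forall s, a <= s < T -> 0 < f s).
  { intros s Hs; destruct (Rlt_or_le 0 (f s)) as [|Hfs]; [assumption|].
    enough (T <= s) by lra.
    apply HTlub; intros t [Ht Hpos]; destruct (Rle_or_lt t s) as [|Hst]; [assumption|].
    specialize (Hpos s ltac:(lra)); lra. }
  assert (Hextend : forall t d, a <= t <= x0 -> 0 < d ->
            (forall s, a <= s < t + d -> 0 < f s) -> Rmin (t + d / 2) x0 <= T).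
  { intros t d Ht Hd Hpos; pose proof (Rmin_l (t + d / 2) x0).
    apply HTub; split; [split; [apply Rmin_glb|apply Rmin_r]; lra|].
    intros s Hs; apply Hpos; lra. }
  assert (HaT : a < T).
  { destruct (at_right_pos f a Hfa Hright) as [d [Hd Hpos]].
    pose proof (Hextend a d ltac:(lra) Hd Hpos).
    enough (a < Rmin (a + d / 2) x0) by lra.
    apply Rmin_glb_lt; lra. }
  assert (HTx0 : T <= x0) by (apply HTlub; intros t [Ht _]; lra).
  exists T; split; [lra|]; split; [|exact Hbelow].
  assert (HfT : 0 <= f T).
  { apply (nonneg_at_left_limit f a T HaT); [intros s Hs; apply Rlt_le, Hbelow; lra|].
    apply continuous_at_left, Hcont; lra. }
  destruct HfT as [HfT|HfT]; [exfalso|lra].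
  assert (HTx0' : T < x0) by (destruct (Req_dec T x0) as [->|]; lra).
  destruct (at_right_pos f T HfT (continuous_at_right _ _ (Hcont T ltac:(lra))))
    as [d [Hd Hpos]].
  assert (Hle : Rmin (T + d / 2) x0 <= T).
  { apply Hextend; [lra|assumption|].
    intros s Hs; destruct (Rlt_or_le s T); [apply Hbelow|apply Hpos]; lra. }
  enough (T < Rmin (T + d / 2) x0) by lra.
  apply Rmin_glb_lt; lra.
Qed.

Lemma positive_barrier (f f' : R -> R) a b : a < b -> 0 < f a ->
  filterlim f (at_right a) (locally (f a)) ->
  (forall x, a < x < b -> is_derive f x (f' x)) ->
  (forall x, a < x < b -> f x = 0 -> 0 < f' x) ->
  forall x, a <= x < b -> 0 < f x.
Proof.
  intros Hab Hfa Hright Hder Hcross x0 Hx0.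
  destruct (Rlt_or_le 0 (f x0)) as [|Hx0neg]; [assumption|exfalso].
  assert (Hax0 : a < x0) by (destruct (Req_dec a x0) as [<-|]; lra).
  destruct (first_zero f a x0 Hax0 Hfa Hx0neg Hright) as [T [HT [HfT Hbelow]]].
  { intros x Hx; apply (is_derive_continuous f x (f' x)), Hder; lra. }
  destruct (is_derive_pos_lt_left f T (f' T) (Hder T ltac:(lra))
      (Hcross T ltac:(lra) HfT) (T - a) ltac:(lra)) as [y [Hy Hfy]].
  specialize (Hbelow y ltac:(lra)); lra.
Qed.

Lemma barrier_nonneg (f f' : R -> R) a b : a < b -> 0 < f a ->
  filterlim f (at_right a) (locally (f a)) ->
  filterlim f (at_left b) (locally (f b)) ->
  (forall x, a < x < b -> is_derive f x (f' x)) ->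
  (forall x, a < x < b -> f x = 0 -> 0 < f' x) ->
  0 <= f b.
Proof.
  intros Hab Hfa Hright Hleft Hder Hcross.
  apply (nonneg_at_left_limit f a b Hab); [|exact Hleft].
  intros x Hx; apply Rlt_le, (positive_barrier f f' a b); auto; lra.
Qed.

Lemma sqrt_lt_sq q y : sqrt q < y -> q < y ^ 2.
Proof.
  intros H; pose proof (sqrt_pos q).
  destruct (Rle_or_lt 0 q) as [Hq|Hq]; [|nra].
  rewrite <- (pow2_sqrt q Hq); nra.
Qed.

Lemma sqrt_sq_scale b u : 1 <= b -> 0 <= u ->
  sqrt ((b * u) ^ 2 - u ^ 2) = sqrt (b ^ 2 - 1) * u.
Proof.
  intros Hb Hu.
  replace ((b * u) ^ 2 - u ^ 2) with ((b ^ 2 - 1) * u ^ 2) by ring.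
  rewrite sqrt_mult_alt, sqrt_pow2; nra.
Qed.

Lemma sqrt_sq_sub_le_self b : 1 <= b -> sqrt (b ^ 2 - 1) <= b.
Proof.
  intros Hb; rewrite <- (sqrt_pow2 b) at 2 by lra.
  apply sqrt_le_1; nra.
Qed.

(* d/db (b l - sqrt (b^2 - 1)) = l - b / sqrt (b^2 - 1) <= l - 1 <= 0 *)
Lemma sqrt_slope_antitone l b W : l <= 1 -> 1 <= b <= W ->
  W * l - sqrt (W ^ 2 - 1) <= b * l - sqrt (b ^ 2 - 1).
Proof.
  intros Hl Hb.
  pose proof (sqrt_pos (b ^ 2 - 1)); pose proof (sqrt_sq_sub_le_self b ltac:(lra)).
  pose proof (sqrt_pos (W ^ 2 - 1)); pose proof (sqrt_sq_sub_le_self W ltac:(lra)).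
  assert (HAB : (sqrt (W ^ 2 - 1) - sqrt (b ^ 2 - 1)) * (sqrt (W ^ 2 - 1) + sqrt (b ^ 2 - 1))
                = (W - b) * (W + b)).
  { transitivity (sqrt (W ^ 2 - 1) ^ 2 - sqrt (b ^ 2 - 1) ^ 2); [ring|].
    rewrite !pow2_sqrt by nra; ring. }
  assert (W - b <= sqrt (W ^ 2 - 1) - sqrt (b ^ 2 - 1)); [|nra].
  destruct (Req_dec (sqrt (W ^ 2 - 1) + sqrt (b ^ 2 - 1)) 0); [nra|].
  apply (Rmult_le_reg_r (sqrt (W ^ 2 - 1) + sqrt (b ^ 2 - 1))); nra.
Qed.

Lemma sqrt_sq_sub_lipschitz X y q : 0 <= y <= X -> q <= y ^ 2 -> q < X ^ 2 ->
  sqrt (X ^ 2 - q) - sqrt (y ^ 2 - q) <= (X - y) * (2 * X / sqrt (X ^ 2 - q)).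
Proof.
  intros Hy Hqy HqX.
  pose proof (pow2_sqrt (X ^ 2 - q) ltac:(nra)); pose proof (pow2_sqrt (y ^ 2 - q) ltac:(nra)).
  assert (HA : 0 < sqrt (X ^ 2 - q)) by (apply sqrt_lt_R0; nra).
  pose proof (sqrt_pos (y ^ 2 - q)).
  assert (sqrt (y ^ 2 - q) <= sqrt (X ^ 2 - q)) by (apply sqrt_le_1; nra).
  apply (Rmult_le_reg_r (sqrt (X ^ 2 - q))); [exact HA|].
  field_simplify; [nra|lra].
Qed.

Lemma mul_lt_sqrt_sq_sub_1 alpha W : 1 < W * sqrt (1 - alpha ^ 2) ->
  1 < W /\ W * alpha < sqrt (W ^ 2 - 1).
Proof.
  intros HWs; pose proof (sqrt_pos (1 - alpha ^ 2)).
  assert (Hs1 : sqrt (1 - alpha ^ 2) <= 1)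
    by (rewrite <- sqrt_1 at 2; apply sqrt_le_1_alt; nra).
  assert (Hpos : 0 <= 1 - alpha ^ 2).
  { destruct (Rle_or_lt 0 (1 - alpha ^ 2)) as [|Hneg]; [assumption|].
    rewrite sqrt_neg_0 in HWs by lra; lra. }
  assert (HW : 1 < W) by nra.
  split; [exact HW|].
  assert (Hsq : (W * alpha) ^ 2 < sqrt (W ^ 2 - 1) ^ 2).
  { rewrite pow2_sqrt by nra.
    assert (W ^ 2 * sqrt (1 - alpha ^ 2) ^ 2 > 1) by nra.
    rewrite pow2_sqrt in * by exact Hpos; nra. }
  pose proof (sqrt_pos (W ^ 2 - 1)).
  destruct (Rlt_or_le (W * alpha) (sqrt (W ^ 2 - 1))) as [|Hge]; [assumption|nra].
Qed.

Lemma sqrt_sq_sub_1_lt_mul alpha W : 0 <= alpha <= 1 -> 1 < W ->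
  W * sqrt (1 - alpha ^ 2) < 1 -> sqrt (W ^ 2 - 1) < W * alpha.
Proof.
  intros Halpha HW HWs.
  assert (Hsq : sqrt (W ^ 2 - 1) ^ 2 < (W * alpha) ^ 2).
  { rewrite pow2_sqrt by nra.
    assert (0 <= W * sqrt (1 - alpha ^ 2)) by (pose proof (sqrt_pos (1 - alpha ^ 2)); nra).
    assert (W ^ 2 * sqrt (1 - alpha ^ 2) ^ 2 < 1) by nra.
    rewrite pow2_sqrt in * by nra; nra. }
  assert (0 <= W * alpha) by nra.
  destruct (Rlt_or_le (sqrt (W ^ 2 - 1)) (W * alpha)) as [|Hge]; [assumption|nra].
Qed.

Lemma Rdiv_exp_mul_le c t t' : 0 <= c -> t <= t' -> c / exp t' * exp t <= c.
Proof.
  intros Hc Ht.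
  assert (Hexp : exp t <= exp t')
    by (destruct Ht as [Ht|<-]; [apply Rlt_le, exp_increasing, Ht|apply Rle_refl]).
  pose proof (exp_pos t'); unfold Rdiv.
  rewrite Rmult_assoc; rewrite <- (Rmult_1_r c) at 2; apply Rmult_le_compat_l; [exact Hc|].
  rewrite Rmult_comm; apply (Rmult_le_reg_l (exp t')); [assumption|].
  rewrite <- Rmult_assoc, Rinv_r_simpl_m by lra; lra.
Qed.

Lemma Rabs_ratio_sub_1_le a b s k : 0 < b -> 0 < s ->
  (1 - k) / s * b <= a -> a <= (1 + k) / s * b -> Rabs (a / (b / s) - 1) <= k.
Proof.
  intros Hb Hs Hlow Hup.
  assert (Hq : a / (b / s) * b = a * s) by (field; lra).
  assert (Hlow' : (1 - k) * b <= a * s)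
    by (replace ((1 - k) * b) with ((1 - k) / s * b * s) by (field; lra); nra).
  assert (Hup' : a * s <= (1 + k) * b)
    by (replace ((1 + k) * b) with ((1 + k) / s * b * s) by (field; lra); nra).
  apply Rabs_le; split; nra.
Qed.

Definition logderiv (f : R -> R) x := Derive (fun y => ln (f y)) x.

Lemma is_derive_logderiv (f : R -> R) x : ex_derive f x -> 0 < f x ->
  is_derive f x (logderiv f x * f x).
Proof.
  intros [d Hd] Hf; change R in d.
  assert (Hln : is_derive (fun y => ln (f y)) x (d / f x)).
  { apply (is_derive_comp ln f); [apply is_derive_ln|]; auto. }
  replace (logderiv f x) with (d / f x) by (symmetry; exact (is_derive_unique _ _ _ Hln)).
  replace (d / f x * f x) with d by (field; lra); exact Hd.
Qed.

Lemma solution_gronwall (v g h : R -> R) a b K eta :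
  a < b -> 0 < K -> 0 < eta ->
  filterlim g (at_right a) (locally (g a)) -> filterlim h (at_right a) (locally (h a)) ->
  filterlim g (at_left b) (locally (g b)) -> filterlim h (at_left b) (locally (h b)) ->
  (forall x, a < x < b ->
     is_derive g x (sqrt (g x ^ 2 - v x)) /\ is_derive h x (sqrt (h x ^ 2 - v x)) /\
     sqrt (v x) < h x /\ 2 * g x / sqrt (g x ^ 2 - v x) <= K) ->
  g a - eta < h a ->
  g b - eta * exp (2 * K * (b - a)) <= h b.
Proof.
  intros Hab HK Heta Hgr Hhr Hgl Hhl Hsol Ha.
  (* At a zero of h - (g - eta E) the Lipschitz bound K gives g' - h' <= K eta E, which is
     beaten by the slope 2 K eta E of eta E. *)
  set (E x := exp (2 * K * (x - a))).
  assert (HE : forall x, is_derive E x (2 * K * E x)).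
  { intros x; unfold E; auto_derive; [exact I|now rewrite Rmult_1_r]. }
  assert (HEc : forall x, continuous (fun y => eta * E y) x).
  { intros x; apply (is_derive_continuous _ _ (eta * (2 * K * E x))), is_derive_scal, HE. }
  set (f x := h x - (g x - eta * E x)).
  set (f' x := sqrt (h x ^ 2 - v x) - (sqrt (g x ^ 2 - v x) - eta * (2 * K * E x))).
  enough (0 <= f b) by (unfold f, E in *; lra).
  apply (barrier_nonneg f f' a b Hab).
  - unfold f, E; rewrite Rminus_diag, Rmult_0_r, exp_0; lra.
  - apply filterlim_Rminus; [exact Hhr|].
    apply filterlim_Rminus; [exact Hgr|apply (continuous_at_right (fun y => eta * E y)), HEc].
  - apply filterlim_Rminus; [exact Hhl|].
    apply filterlim_Rminus; [exact Hgl|apply (continuous_at_left (fun y => eta * E y)), HEc].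
  - intros x Hx; destruct (Hsol x Hx) as [Hg [Hh _]].
    apply (is_derive_minus h); [exact Hh|].
    apply (is_derive_minus g); [exact Hg|apply is_derive_scal, HE].
  - intros x Hx Hfx; destruct (Hsol x Hx) as [_ [_ [Hvh HgK]]].
    assert (Hgap : g x - h x = eta * E x) by (unfold f in Hfx; lra).
    assert (HEx : 0 < E x) by apply exp_pos.
    pose proof (sqrt_pos (v x)); pose proof (sqrt_lt_sq _ _ Hvh).
    assert (HeE : 0 < eta * E x) by (apply Rmult_lt_0_compat; lra).
    assert (Hvg : v x < g x ^ 2) by nra.
    assert (Hlip := sqrt_sq_sub_lipschitz (g x) (h x) (v x) ltac:(nra) ltac:(lra) Hvg).
    rewrite Hgap in Hlip.
    assert (HlipK : eta * E x * (2 * g x / sqrt (g x ^ 2 - v x)) <= eta * E x * K)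
      by (apply Rmult_le_compat_l; [nra|exact HgK]).
    unfold f'; nra.
Qed.

Lemma typeA_restrict v phi0 phi1 h x1 : phi0 < x1 < phi1 ->
  filterlim h (at_left phi1) (locally (h phi1)) ->
  (forall phi, phi0 <= phi < phi1 -> h phi > sqrt (v phi)) ->
  (forall phi, phi0 < phi < phi1 -> is_derive h phi (sqrt (h phi ^ 2 - v phi))) ->
  h phi1 = sqrt (v phi1) ->
  typeA v x1 (h x1).
Proof.
  intros Hx1 Hleft Habove Hder Hend.
  assert (Hhx1 := Hder x1 Hx1).
  exists phi1, h; split; [lra|]; split; [reflexivity|]; split.
  { apply continuous_at_right, (is_derive_continuous _ _ _ Hhx1). }
  split; [exact Hleft|]; split; [intros x Hx; apply Habove; lra|].
  split; [intros x Hx; apply Hder; lra|exact Hend].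
Qed.

Section Separatrix.

Variables (v : R -> R) (phi0 : R).
Hypothesis v_pos : forall x, phi0 <= x -> 0 < v x.
Hypothesis v_derivable : forall x, ex_derive v x.

Local Notation L := (logderiv (fun x => sqrt (v x))).

Lemma is_derive_sqrt_v x : phi0 <= x ->
  is_derive (fun y => sqrt (v y)) x (L x * sqrt (v x)).
Proof.
  intros Hx; pose proof (v_pos x Hx).
  apply (is_derive_logderiv (fun y => sqrt (v y))); [|apply sqrt_lt_R0; assumption].
  auto_derive; auto.
Qed.

Lemma continuous_sqrt_v x : continuous (fun y => sqrt (v y)) x.
Proof. apply continuous_sqrt_comp, (ex_derive_continuous v), v_derivable. Qed.

Lemma sqrt_sq_sub_v b x : phi0 <= x -> 1 <= b ->
  sqrt ((b * sqrt (v x)) ^ 2 - v x) = sqrt (b ^ 2 - 1) * sqrt (v x).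
Proof.
  intros Hx Hb; rewrite <- (sqrt_sq_scale b) by (auto; apply sqrt_pos).
  rewrite pow2_sqrt; [reflexivity|apply Rlt_le, v_pos, Hx].
Qed.

Lemma global_sol_ge h W mu x1 : global_sol v phi0 h -> phi0 < x1 -> 1 < W -> 0 < mu ->
  (forall x, x1 <= x -> L x <= 1 /\ mu < W * L x - sqrt (W ^ 2 - 1)) ->
  W * sqrt (v x1) <= h x1.
Proof.
  intros [_ [Habove Hder]] Hx1 HW Hmu HL.
  destruct (Rle_or_lt (W * sqrt (v x1)) (h x1)) as [|Hlt]; [assumption|exfalso].
  set (x2 := x1 + (W - 1) / mu).
  assert (Hx12 : x1 < x2) by (unfold x2; assert (0 < (W - 1) / mu) by
    (apply Rdiv_lt_0_compat; lra); lra).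
  set (f x := (W - mu * (x - x1)) * sqrt (v x) - h x).
  set (f' x := (- mu) * sqrt (v x) + (W - mu * (x - x1)) * (L x * sqrt (v x))
               - sqrt (h x ^ 2 - v x)).
  assert (Hf : forall x, phi0 < x -> is_derive f x (f' x)).
  { intros x Hx; unfold f, f'.
    apply (is_derive_minus (fun y => (W - mu * (y - x1)) * sqrt (v y)) h); [|apply Hder, Hx].
    apply (is_derive_mult (fun y => W - mu * (y - x1)) (fun y => sqrt (v y)));
      [|apply is_derive_sqrt_v; lra|apply Rmult_comm].
    auto_derive; [exact I|ring]. }
  assert (Hfc : forall x, phi0 < x -> continuous f x)
    by (intros x Hx; exact (is_derive_continuous _ _ _ (Hf x Hx))).
  assert (Hend : 0 <= f x2).
  { apply (barrier_nonneg f f' x1 x2 Hx12).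
    - unfold f; lra.
    - apply continuous_at_right, Hfc, Hx1.
    - apply continuous_at_left, Hfc; lra.
    - intros x Hx; apply Hf; lra.
    - intros x Hx Hfx.
      set (b := W - mu * (x - x1)) in *.
      assert (Hb1 : 1 < b).
      { enough (mu * (x - x1) < mu * ((W - 1) / mu))
          by (replace (mu * ((W - 1) / mu)) with (W - 1) in * by (field; lra); unfold b; lra).
        apply Rmult_lt_compat_l; [exact Hmu|unfold x2 in Hx; lra]. }
      assert (HbW : b <= W) by (unfold b; nra).
      assert (Hu : 0 < sqrt (v x)) by (apply sqrt_lt_R0, v_pos; lra).
      assert (Hh : h x = b * sqrt (v x)) by (unfold f, b in *; lra).
      destruct (HL x ltac:(lra)) as [HL1 HLW].
      pose proof (sqrt_slope_antitone (L x) b W HL1 ltac:(lra)).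
      unfold f'; rewrite Hh, sqrt_sq_sub_v by lra; fold b.
      replace (_ - _) with (sqrt (v x) * (b * L x - sqrt (b ^ 2 - 1) - mu)) by ring.
      apply Rmult_lt_0_compat; lra. }
  unfold f in Hend.
  replace (W - mu * (x2 - x1)) with 1 in Hend by (unfold x2; field; lra).
  specialize (Habove x2 ltac:(lra)); lra.
Qed.

Lemma typeA_start_le c W x1 : phi0 <= x1 -> 1 < W ->
  (forall x, x1 <= x -> W * L x < sqrt (W ^ 2 - 1)) ->
  typeA v x1 c -> c <= W * sqrt (v x1).
Proof.
  intros Hx1 HW HL [phi1 [h [Hx1phi1 [Hc [Hright [Hleft [_ [Hder Hend]]]]]]]].
  destruct (Rle_or_lt c (W * sqrt (v x1))) as [|Hlt]; [assumption|exfalso].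
  set (f x := h x - W * sqrt (v x)).
  set (f' x := sqrt (h x ^ 2 - v x) - W * (L x * sqrt (v x))).
  assert (HWu : forall x, continuous (fun y => W * sqrt (v y)) x)
    by (intros x; apply (continuous_scal_r W (fun y => sqrt (v y))), continuous_sqrt_v).
  assert (Hfin : 0 <= f phi1).
  { apply (barrier_nonneg f f' x1 phi1 Hx1phi1).
    - unfold f; lra.
    - apply filterlim_Rminus; [exact Hright|apply (continuous_at_right (fun y => W * sqrt (v y)))].
      apply HWu.
    - apply filterlim_Rminus; [exact Hleft|apply (continuous_at_left (fun y => W * sqrt (v y)))].
      apply HWu.
    - intros x Hx; apply (is_derive_minus h); [apply Hder, Hx|].
      apply is_derive_scal, is_derive_sqrt_v; lra.
    - intros x Hx Hfx.
      assert (Hu : 0 < sqrt (v x)) by (apply sqrt_lt_R0, v_pos; lra).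
      assert (Hh : h x = W * sqrt (v x)) by (unfold f in Hfx; lra).
      unfold f'; rewrite Hh, sqrt_sq_sub_v by lra.
      replace (_ - _) with (sqrt (v x) * (sqrt (W ^ 2 - 1) - W * L x)) by ring.
      apply Rmult_lt_0_compat; [exact Hu|specialize (HL x ltac:(lra)); lra]. }
  assert (Hu : 0 < sqrt (v phi1)) by (apply sqrt_lt_R0, v_pos; lra).
  unfold f in Hfin; nra.
Qed.

Lemma global_sol_compact_bounds h x1 : global_sol v phi0 h -> phi0 < x1 ->
  exists delta K, 0 < delta /\ 0 < K /\ forall x, phi0 <= x <= x1 ->
    delta <= h x - sqrt (v x) /\ 2 * h x / sqrt (h x ^ 2 - v x) <= K.
Proof.
  intros [Hright [Habove Hder]] Hx1.
  set (H y := h (Rmax phi0 y)).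
  assert (HH : forall x, phi0 <= x -> H x = h x)
    by (intros x Hx; unfold H; rewrite Rmax_right; lra).
  assert (HcH : forall x, continuous H x).
  { apply continuous_Rmax_extension; [exact Hright|].
    intros x Hx; exact (is_derive_continuous _ _ _ (Hder x Hx)). }
  assert (Hgap : forall x, phi0 <= x -> 0 < h x ^ 2 - v x).
  { intros x Hx; pose proof (sqrt_lt_sq _ _ (Habove x Hx)); lra. }
  destruct (continuous_ab_min_consistent (fun y => H y - sqrt (v y)) phi0 x1)
    as [xm [Hmin Hxm]]; [lra| |].
  { intros x _; apply (continuous_minus H (fun y => sqrt (v y)));
      [apply HcH|apply continuous_sqrt_v]. }
  destruct (continuous_ab_maj_consistent (fun y => 2 * H y / sqrt (H y ^ 2 - v y)) phi0 x1)
    as [xM [Hmax HxM]]; [lra| |].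
  { intros x Hx.
    apply (continuous_mult (fun y => 2 * H y) (fun y => / sqrt (H y ^ 2 - v y))).
    - apply (continuous_scal_r 2 H), HcH.
    - apply continuous_Rinv_comp; [|rewrite HH by lra; apply Rgt_not_eq, sqrt_lt_R0, Hgap; lra].
      apply continuous_sqrt_comp, (continuous_minus (fun y => H y ^ 2) v);
        [|apply (ex_derive_continuous v), v_derivable].
      apply (continuous_mult H (fun y => H y * 1)); [apply HcH|].
      apply (continuous_mult H (fun _ => 1)); [apply HcH|apply continuous_const]. }
  exists (h xm - sqrt (v xm)), (Rmax (2 * h xM / sqrt (h xM ^ 2 - v xM)) 1).
  split; [pose proof (Habove xm ltac:(lra)); lra|].
  split; [apply Rlt_le_trans with 1; [lra|apply Rmax_r]|].
  intros x Hx; specialize (Hmin x Hx); specialize (Hmax x Hx); cbv beta in Hmin, Hmax.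
  rewrite !HH in Hmin, Hmax by lra.
  split; [exact Hmin|eapply Rle_trans; [exact Hmax|apply Rmax_l]].
Qed.

Lemma separatrix_typeA_near hs x1 m : separatrix v phi0 hs -> phi0 < x1 -> 0 < m ->
  exists c, hs x1 - m < c /\ typeA v x1 c.
Proof.
  intros [Hsol [HtypeA _]] Hx1 Hm.
  destruct (global_sol_compact_bounds hs x1 Hsol Hx1) as [delta [K [Hdelta [HK Hbounds]]]].
  destruct Hsol as [Hsright [_ Hsder]].
  set (E x := exp (2 * K * (x - phi0))).
  (* tol <= delta / 2 keeps the shadowing solution h away from sqrt v on [phi0, x1], so that h
     survives beyond x1 *)
  set (tol := Rmin delta m / 2).
  assert (Htol : 0 < tol) by (apply Rdiv_lt_0_compat; [apply Rmin_glb_lt|]; lra).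
  set (eta := tol / E x1).
  assert (Heta : 0 < eta) by (apply Rdiv_lt_0_compat; [exact Htol|apply exp_pos]).
  assert (HetaE : forall x, x <= x1 -> eta * E x <= tol)
    by (intros x Hx; apply Rdiv_exp_mul_le; [lra|apply Rmult_le_compat_l; lra]).
  assert (Heta0 : eta <= tol)
    by (rewrite <- (Rmult_1_r eta), <- exp_0; apply Rdiv_exp_mul_le; [lra|nra]).
  assert (Htol_delta : tol <= delta / 2) by (unfold tol; pose proof (Rmin_l delta m); lra).
  assert (Htol_m : tol <= m / 2) by (unfold tol; pose proof (Rmin_r delta m); lra).
  destruct (HtypeA (hs phi0 - eta / 2)) as
    [phi1 [h [Hphi01 [Hh0 [Hhright [Hhleft [Hhabove [Hhder Hhend]]]]]]]].
  { pose proof (proj1 (Hbounds phi0 ltac:(lra))); lra. }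
  assert (Hshadow : forall b, phi0 < b <= Rmin x1 phi1 ->
            filterlim h (at_left b) (locally (h b)) -> hs b - tol <= h b).
  { intros b [Hb Hbmin] Hhb; pose proof (Rmin_l x1 phi1); pose proof (Rmin_r x1 phi1).
    apply Rle_trans with (hs b - eta * E b); [specialize (HetaE b ltac:(lra)); lra|].
    apply (solution_gronwall v hs h phi0 b K eta Hb HK Heta Hsright Hhright); [|exact Hhb| |lra].
    - apply continuous_at_left, (is_derive_continuous _ _ _ (Hsder b Hb)).
    - intros x Hx; split; [apply Hsder; lra|]; split; [apply Hhder; lra|].
      split; [apply Hhabove; lra|apply (proj2 (Hbounds x ltac:(lra)))]. }
  destruct (Rlt_or_le x1 phi1) as [Hx1phi1|Hphi1x1].
  - exists (h x1); split; [|apply (typeA_restrict v phi0 phi1); auto; lra].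
    enough (hs x1 - tol <= h x1) by lra.
    apply Hshadow; [rewrite Rmin_left; lra|].
    apply continuous_at_left, (is_derive_continuous _ _ _ (Hhder x1 ltac:(lra))).
  - exfalso.
    assert (Hend : hs phi1 - tol <= h phi1).
    { apply Hshadow; [rewrite Rmin_right; lra|exact Hhleft]. }
    pose proof (proj1 (Hbounds phi1 ltac:(lra))); lra.
Qed.

Lemma separatrix_le hs W x1 : separatrix v phi0 hs -> phi0 < x1 -> 1 < W ->
  (forall x, x1 <= x -> W * L x < sqrt (W ^ 2 - 1)) ->
  hs x1 <= W * sqrt (v x1).
Proof.
  intros Hsep Hx1 HW HL.
  destruct (Rle_or_lt (hs x1) (W * sqrt (v x1))) as [|Hlt]; [assumption|exfalso].
  destruct (separatrix_typeA_near hs x1 (hs x1 - W * sqrt (v x1)) Hsep Hx1 ltac:(lra))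
    as [c [Hc HA]].
  pose proof (typeA_start_le c W x1 ltac:(lra) HW HL HA); lra.
Qed.

Lemma separatrix_eventually_le hs (alpha W : R) : separatrix v phi0 hs ->
  is_lim L p_infty alpha -> 1 < W * sqrt (1 - alpha ^ 2) ->
  Rbar_locally p_infty (fun x => hs x <= W * sqrt (v x)).
Proof.
  intros Hsep Hlim HWs.
  destruct (mul_lt_sqrt_sq_sub_1 alpha W HWs) as [HW HWa].
  destruct (is_lim_eventually_lt L alpha (sqrt (W ^ 2 - 1) / W) Hlim)
    as [M HM]; [apply (Rmult_lt_reg_l W); [lra|]; field_simplify; lra|].
  exists (Rmax M phi0); intros x Hx.
  pose proof (Rmax_l M phi0); pose proof (Rmax_r M phi0).
  apply separatrix_le; [assumption|lra|assumption|].
  intros y Hy; specialize (HM y ltac:(lra)).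
  apply (Rmult_lt_compat_l W) in HM; [|lra].
  replace (W * (sqrt (W ^ 2 - 1) / W)) with (sqrt (W ^ 2 - 1)) in HM by (field; lra).
  exact HM.
Qed.

Lemma global_sol_eventually_ge h (alpha W : R) : global_sol v phi0 h ->
  is_lim L p_infty alpha -> 0 <= alpha <= 1 -> (forall x, phi0 < x -> L x <= 1) ->
  W * sqrt (1 - alpha ^ 2) < 1 ->
  Rbar_locally p_infty (fun x => W * sqrt (v x) <= h x).
Proof.
  intros Hsol Hlim Halpha HL1 HWs.
  destruct (Rle_or_lt W 1) as [HW|HW].
  { exists phi0; intros x Hx.
    pose proof (proj1 (proj2 Hsol) x ltac:(lra)); pose proof (sqrt_pos (v x)); nra. }
  pose proof (sqrt_sq_sub_1_lt_mul alpha W Halpha HW HWs) as HWa.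
  set (mu := (W * alpha - sqrt (W ^ 2 - 1)) / 2).
  destruct (is_lim_eventually_gt L alpha (alpha - mu / W) Hlim) as [M HM].
  { assert (0 < mu / W) by (apply Rdiv_lt_0_compat; unfold mu; lra); lra. }
  exists (Rmax M phi0); intros x Hx.
  pose proof (Rmax_l M phi0); pose proof (Rmax_r M phi0).
  apply (global_sol_ge h W mu x Hsol); [lra|assumption|unfold mu; lra|].
  intros y Hy; split; [apply HL1; lra|].
  specialize (HM y ltac:(lra)).
  apply (Rmult_lt_compat_l W) in HM; [|lra].
  replace (W * (alpha - mu / W)) with (W * alpha - mu) in HM by (field; lra).
  unfold mu in *; lra.
Qed.

End Separatrix.

Theorem theorem3 (alpha : R) (v : R -> R) (phiv phi0 : R) (hs : R -> R) :
  0 <= alpha < 1 ->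
  smooth v ->
  (forall phi, phiv < phi -> 0 < v phi /\ 0 < Derive v phi) ->
  is_lim (fun phi => Derive (fun x => ln (sqrt (v x))) phi) p_infty alpha ->
  phiv < phi0 ->
  (forall phi, phi0 < phi -> Derive (fun x => ln (sqrt (v x))) phi < 1) ->
  separatrix v phi0 hs ->
  is_lim (fun phi => hs phi / (sqrt (v phi) / sqrt (1 - alpha ^ 2))) p_infty 1.
Proof.
  intros Halpha Hsmooth Hpos Hlim Hphi0 HL1 Hsep.
  assert (Hv : forall x, phi0 <= x -> 0 < v x) by (intros x Hx; apply (Hpos x); lra).
  assert (Hdv : forall x, ex_derive v x) by (intros x; exact (Hsmooth 1%nat x)).
  assert (Hs : 0 < sqrt (1 - alpha ^ 2)) by (apply sqrt_lt_R0; nra).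
  set (s := sqrt (1 - alpha ^ 2)) in *.
  apply is_lim_spec; intros eps; set (k := eps / 2).
  assert (Hk : 0 < k) by (apply Rdiv_lt_0_compat; [apply cond_pos|lra]).
  assert (Hscale : forall c, c / s * s = c) by (intros c; field; lra).
  assert (Hupper := separatrix_eventually_le v phi0 Hv Hdv hs alpha ((1 + k) / s) Hsep Hlim
    ltac:(rewrite Hscale; lra)).
  assert (Hlower := global_sol_eventually_ge v phi0 Hv Hdv hs alpha ((1 - k) / s)
    (proj1 Hsep) Hlim ltac:(lra) (fun x Hx => Rlt_le _ _ (HL1 x Hx))
    ltac:(rewrite Hscale; lra)).
  assert (Hfar : Rbar_locally p_infty (fun x => phi0 < x)) by (exists phi0; auto).
  generalize (filter_and _ _ Hfar (filter_and _ _ Hupper Hlower)).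
  apply filter_imp; intros x [Hx [Hup Hlow]].
  apply Rle_lt_trans with k; [|unfold k; pose proof (cond_pos eps); lra].
  apply Rabs_ratio_sub_1_le; [apply sqrt_lt_R0, Hv; lra|assumption|assumption|assumption].
Qed.
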